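(* Let $\vec f$ be a classical solution of (AP), (LP) or (JP) with smooth initial curve satisfying $A(0)>0$, whose maximal existence time $T$ is finite. Assume \[ \limsup_{t\to T^-}\max_{s\in\mathbb R/L(t)\mathbb Z}\kappa(s,t)=\infty . \] Then for all $t\in[0,T)$, \[ \max_{s\in\mathbb R/L(t)\mathbb Z}\kappa(s,t)\ge\frac{1}{\sqrt{2(T-t)}} . \]
   Context: Fix an integer $n\ge1$. For a closed plane curve $\vec f:\mathbb{R}/L\mathbb{Z}\to\mathbb{R}^2$ parametrized by arc length $s$ ($L>0$ its length): $\vec\nu$ is $\partial_s\vec f$ rotated counterclockwise by $\pi/2$, $\kappa=\partial_s^2\vec f\cdot\vec\nu$, rotation number $n=\frac1{2\pi}\int_0^L\kappa\,ds$, $A=-\frac12\int_0^L\vec f\cdot\vec\nu\,ds$, $\tilde\kappa=\kappa-\frac1L\int_0^L\kappa\,ds$. A classical solution on $[0,T)$ is a smooth family $\vec f(\cdot,t)$ of closed curves with rotation number $n$, each parametrized by arc length on $\mathbb{R}/L(t)\mathbb{Z}$, satisfying $\partial_t\vec f=(\tilde\kappa-g/L)\vec\nu$, where $g$ is one of: (AP) $g\equiv0$; (LP) $g=L\left(\int_0^L\kappa\,ds\right)^{-1}\int_0^L\tilde\kappa^2\,ds$; (JP) $g=\frac{L^2}{2A}-\int_0^L\kappa\,ds$; $T$ is the maximal existence time. *)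

From Stdlib Require Import Reals Lra ClassicalEpsilon.
Open Scope R_scope.

(* Total Riemann integral: the value of RiemannInt when f is integrable
   on [a,b] (independent of the proof), arbitrary otherwise. *)
Definition Rint (f : R -> R) (a b : R) : R :=
  epsilon (inhabits 0)
    (fun v => exists pr : Riemann_integrable f a b, RiemannInt pr = v).

(* Partial derivatives (total functions; meaningful where they exist). *)
Definition pdu (F : R -> R -> R) (u t : R) : R :=
  epsilon (inhabits 0) (fun l => derivable_pt_lim (fun v => F v t) u l).
Definition pdt (F : R -> R -> R) (u t : R) : R :=
  epsilon (inhabits 0) (fun l => derivable_pt_lim (fun s => F u s) t l).

Definition smooth_on (F : R -> R -> R) (T : R) : Prop :=
  exists D : nat -> nat -> R -> R -> R,
    (forall u t, 0 <= t < T -> D 0%nat 0%nat u t = F u t) /\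
    (forall i j u t, 0 <= t < T ->
        derivable_pt_lim (fun v => D i j v t) u (D (S i) j u t)) /\
    (forall i j u t, 0 < t < T ->
        derivable_pt_lim (fun s => D i j u s) t (D i (S j) u t)) /\
    (forall i j u0 t0, 0 <= t0 < T -> forall eps, eps > 0 ->
        exists delta, delta > 0 /\
          forall u t, 0 <= t < T -> Rabs (u - u0) < delta -> Rabs (t - t0) < delta ->
            Rabs (D i j u t - D i j u0 t0) < eps).

(* Curve f(u,t) = (X u t, Y u t), u in R/Z a fixed parameter; arc length
   element ds = speed du. *)
Section Geometry.
Variables X Y : R -> R -> R.

Definition speed (u t : R) : R := sqrt (pdu X u t ^ 2 + pdu Y u t ^ 2).
Definition nu1 (u t : R) : R := - pdu Y u t / speed u t.
Definition nu2 (u t : R) : R := pdu X u t / speed u t.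
(* kappa = d_s^2 f . nu *)
Definition curv (u t : R) : R :=
  (pdu X u t * pdu (pdu Y) u t - pdu Y u t * pdu (pdu X) u t) / speed u t ^ 3.
Definition len (t : R) : R := Rint (fun u => speed u t) 0 1.
Definition tot_curv (t : R) : R := Rint (fun u => curv u t * speed u t) 0 1.
Definition area (t : R) : R :=
  - / 2 * Rint (fun u => (X u t * nu1 u t + Y u t * nu2 u t) * speed u t) 0 1.
Definition curv_tilde (u t : R) : R := curv u t - / len t * tot_curv t.
Definition kmax (t : R) : R :=
  epsilon (inhabits 0)
    (fun k => is_lub (fun c => exists u, 0 <= u <= 1 /\ c = curv u t) k).
End Geometry.

Inductive Flow : Type := AP | LP | JP.

Definition gfun (fl : Flow) (X Y : R -> R -> R) (t : R) : R :=
  match fl with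
  | AP => 0
  | LP => len X Y t * / tot_curv X Y t *
            Rint (fun u => curv_tilde X Y u t ^ 2 * speed X Y u t) 0 1
  | JP => len X Y t ^ 2 / (2 * area X Y t) - tot_curv X Y t
  end.

Definition classical_solution (fl : Flow) (n : nat) (X Y : R -> R -> R) (T : R)
  : Prop :=
  0 < T /\ smooth_on X T /\ smooth_on Y T /\
  (forall u t, 0 <= t < T -> X (u + 1) t = X u t /\ Y (u + 1) t = Y u t) /\
  (forall u t, 0 <= t < T -> speed X Y u t > 0) /\
  (forall t, 0 <= t < T -> / (2 * PI) * tot_curv X Y t = INR n) /\
  (forall u t, 0 < t < T ->
     pdt X u t = (curv_tilde X Y u t - gfun fl X Y t / len X Y t) * nu1 X Y u t /\
     pdt Y u t = (curv_tilde X Y u t - gfun fl X Y t / len X Y t) * nu2 X Y u t).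

Definition maximal_solution (fl : Flow) (n : nat) (X Y : R -> R -> R) (T : R)
  : Prop :=
  classical_solution fl n X Y T /\
  ~ (exists T' (X' Y' : R -> R -> R), T < T' /\ classical_solution fl n X' Y' T' /\
       forall u t, 0 <= t < T -> X' u t = X u t /\ Y' u t = Y u t).

(* The normal velocity of each flow is [kappa - c(t)] with
   [c = kappa_bar + g / L >= 0]: for (AP) and (LP) since the total curvature
   [2 pi n] is positive, and for (JP) because [c = L / (2 A)] and the area
   stays positive, [A' = L^2 / (2 A) - 2 pi n] blowing up as [A] decreases to [0].
   At a point where [kappa(., t)] attains its maximum [K(t)] we have
   [kappa_u = 0], [kappa_uu <= 0], so the evolution equation
   [kappa_t = kappa_ss + kappa^2 (kappa - c)] gives [kappa_t <= K^3] there.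
   Hence [1 / K^2 + (2 + e) t] is nondecreasing for every [e > 0] (a Dini
   derivative argument, [K] being only upper semicontinuous), and comparing
   [t] with times near [T] where [K] is large gives [1 / K(t)^2 <= 2 (T - t)]. *)

From Stdlib Require Import Reals Lra Lia ZArith Classical ClassicalEpsilon FunctionalExtensionality.
From Coquelicot Require Import Coquelicot.
Open Scope R_scope.

(** * Real analysis *)

Lemma ex_derive_continuity_pt (f : R -> R) x : ex_derive f x -> continuity_pt f x.
Proof. intros H. apply continuity_pt_filterlim, (@ex_derive_continuous R_AbsRing R_NormedModule), H. Qed.

Lemma continuity_pt_eps (f : R -> R) x : continuity_pt f x -> forall eps, eps > 0 ->
  exists d, d > 0 /\ forall y, Rabs (y - x) < d -> Rabs (f y - f x) < eps.
Proof.
  intros H eps He. destruct (H eps He) as [d [Hd Hy]]. exists d. split; auto.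
  intros y Hyx. destruct (Req_dec y x) as [->|Hne].
  - rewrite Rminus_diag, Rabs_R0; lra.
  - apply (Hy y). split; [split; [exact I | congruence] | exact Hyx].
Qed.

Lemma is_derive_eq (f : R -> R) x l1 l2 : is_derive f x l1 -> is_derive f x l2 -> l1 = l2.
Proof. intros H1 H2. apply is_derive_unique in H1, H2. congruence. Qed.

Lemma Derive_of_is_derive (f : R -> R) x l : is_derive f x l -> Derive f x = l.
Proof. apply is_derive_unique. Qed.

Lemma is_derive_at_max_eq0 (f : R -> R) x l : is_derive f x l -> (forall y, f y <= f x) -> l = 0.
Proof.
  intros Hd Hmax. apply is_derive_Reals in Hd.
  exact (deriv_maximum f (x - 1) (x + 1) x (exist _ l Hd) ltac:(lra) ltac:(lra) (fun y _ _ => Hmax y)).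
Qed.

Lemma is_derive2_at_max_le0 (f f' : R -> R) x l : (forall y, is_derive f y (f' y)) ->
  is_derive f' x l -> (forall y, f y <= f x) -> l <= 0.
Proof.
  intros Hf Hd Hmax.
  assert (Hcrit : f' x = 0) by exact (is_derive_at_max_eq0 f x (f' x) (Hf x) Hmax).
  apply is_derive_Reals in Hd.
  destruct (Rle_lt_dec l 0) as [Hl|Hl]; auto; exfalso.
  destruct (Hd l Hl) as [d Hdd]. pose proof (cond_pos d).
  destruct (MVT_cor2 f f' x (x + d / 2)) as [z [Hz1 Hz2]]; [lra | intros; apply is_derive_Reals, Hf |].
  specialize (Hdd (z - x) ltac:(lra) ltac:(rewrite Rabs_right; lra)).
  replace (x + (z - x)) with z in Hdd by ring.
  rewrite Hcrit, Rminus_0_r in Hdd. apply Rabs_lt_between in Hdd.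
  assert (Hslope : f' z / (z - x) > 0) by lra.
  assert (Hpos : f' z > 0).
  { replace (f' z) with (f' z / (z - x) * (z - x)) by (field; lra). apply Rmult_lt_0_compat; lra. }
  pose proof (Hmax (x + d / 2)). nra.
Qed.

(* The infimum of the points from which [psi] stays below [psi b] up to [b]
   is reached (right upper semicontinuity) and cannot exceed [a] (strict
   increase from the left). *)
Lemma le_by_real_induction (psi : R -> R) a b : a <= b ->
  (forall c, a < c <= b -> exists d, d > 0 /\ forall h, 0 < h < d -> psi (c - h) < psi c) ->
  (forall c, a <= c < b -> forall e, e > 0 ->
     exists d, d > 0 /\ forall s, c < s < c + d -> s <= b -> psi c <= psi s + e) ->
  psi a <= psi b.
Proof.
  intros Hab Hleft Hright.
  set (good := fun x => a <= x <= b /\ forall s, x <= s <= b -> psi s <= psi b).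
  set (E := fun y => good (- y)).
  assert (Hgood_b : good b) by (split; [lra | intros s Hs; replace s with b by lra; lra]).
  assert (HE : forall x, good x -> E (- x)) by (intros x Hx; unfold E; rewrite Ropp_involutive; exact Hx).
  assert (Hbound : bound E) by (exists (- a); intros y [Hy _]; lra).
  destruct (completeness E Hbound (ex_intro _ (- b) (HE b Hgood_b)))
    as [m [Hub Hleast]].
  set (c := - m).
  assert (Hcb : c <= b) by (unfold c; enough (- b <= m) by lra; apply Hub, HE, Hgood_b).
  assert (Hac : a <= c) by (unfold c; enough (m <= - a) by lra; apply Hleast; intros y [Hy _]; lra).
  assert (Habove : forall s, c < s <= b -> psi s <= psi b).
  { intros s Hs. destruct (classic (exists x, good x /\ x < s)) as [[x [[_ Hx] Hxs]] | Hno].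
    - apply Hx. lra.
    - exfalso. enough (m <= - s) by (unfold c in Hs; lra).
      apply Hleast. intros y Hy. destruct (Rle_lt_dec y (- s)) as [h|h]; auto.
      exfalso. apply Hno. exists (- y). split; [exact Hy | lra]. }
  assert (Hc : psi c <= psi b).
  { destruct (Req_dec c b) as [-> | Hne]; [lra |].
    destruct (Rle_lt_dec (psi c) (psi b)) as [h|h]; auto. exfalso.
    destruct (Hright c ltac:(lra) ((psi c - psi b) / 2) ltac:(lra)) as [d [Hd Hs]].
    set (s := c + Rmin d (b - c) / 2).
    assert (0 < Rmin d (b - c)) by (apply Rmin_glb_lt; lra).
    pose proof (Rmin_l d (b - c)). pose proof (Rmin_r d (b - c)).
    specialize (Hs s ltac:(unfold s; lra) ltac:(unfold s; lra)).
    pose proof (Habove s ltac:(unfold s; lra)). lra. }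
  enough (c = a) by (subst; lra).
  destruct (Req_dec c a) as [h | Hne]; auto. exfalso.
  destruct (Hleft c ltac:(lra)) as [d [Hd Hdec]].
  set (x := Rmax a (c - d / 2)).
  assert (Hxa : a <= x) by apply Rmax_l.
  assert (Hxc : x < c) by (unfold x; apply Rmax_lub_lt; lra).
  assert (Hgood_x : good x).
  { split; [lra |]. intros s Hs.
    destruct (Rlt_le_dec s c) as [hs|hs].
    - assert (c - d / 2 <= x) by apply Rmax_r.
      specialize (Hdec (c - s) ltac:(lra)). replace (c - (c - s)) with s in Hdec by ring. lra.
    - destruct (Req_dec s c) as [-> | hs2]; auto. apply Habove. lra. }
  assert (- x <= m) by (apply Hub, HE, Hgood_x).
  unfold c in Hxc. lra.
Qed.

Lemma first_nonpositive_time (A : R -> R) (t1 : R) : 0 < t1 ->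
  A 0 > 0 -> A t1 <= 0 ->
  (forall e, e > 0 -> exists d, d > 0 /\ forall t, 0 <= t < d -> t <= t1 -> Rabs (A t - A 0) < e) ->
  (forall t, 0 < t <= t1 -> continuity_pt A t) ->
  exists m, 0 < m <= t1 /\ A m <= 0 /\ forall s, 0 <= s < m -> A s > 0.
Proof.
  intros Ht1 HA0 HAt1 Hcont0 Hcont.
  set (E := fun x => 0 <= x <= t1 /\ forall s, 0 <= s <= x -> A s > 0).
  assert (Hbound : bound E) by (exists t1; intros x [Hx _]; lra).
  assert (HE0 : E 0) by (split; [lra | intros s Hs; replace s with 0 by lra; auto]).
  destruct (completeness E Hbound (ex_intro _ 0 HE0)) as [m [Hub Hleast]].
  assert (Hmt1 : m <= t1) by (apply Hleast; intros x [Hx _]; lra).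
  assert (Hm0 : m > 0).
  { destruct (Hcont0 (A 0 / 2) ltac:(lra)) as [d [Hd Hnear]].
    pose proof (Rmin_l (d / 2) (t1 / 2)). pose proof (Rmin_r (d / 2) (t1 / 2)).
    set (x := Rmin (d / 2) (t1 / 2)) in *.
    assert (Hx : 0 < x) by (apply Rmin_glb_lt; lra).
    enough (HEx : E x) by (pose proof (Hub x HEx); lra).
    unfold E; split; [lra |]. intros s Hs.
    specialize (Hnear s ltac:(lra) ltac:(lra)). apply Rabs_lt_between in Hnear. lra. }
  assert (Hbelow : forall s, 0 <= s < m -> A s > 0).
  { intros s Hs. destruct (classic (exists x, E x /\ x > s)) as [[x [[_ Hx] Hxs]] | Hno].
    - apply Hx. lra.
    - exfalso. enough (m <= s) by lra. apply Hleast. intros x Ex.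
      destruct (Rle_lt_dec x s) as [h|h]; auto. exfalso. apply Hno. exists x. auto. }
  exists m. repeat split; auto; try lra.
  destruct (Rle_lt_dec (A m) 0) as [h|Hpos]; auto. exfalso.
  assert (Hmt1' : m < t1) by (destruct (Req_dec m t1) as [->|]; lra).
  destruct (continuity_pt_eps A m (Hcont m ltac:(lra)) (A m) Hpos) as [d [Hd Hnear]].
  pose proof (Rmin_l (m + d / 2) t1). pose proof (Rmin_r (m + d / 2) t1).
  set (x := Rmin (m + d / 2) t1) in *.
  assert (Hmx : m < x) by (apply Rmin_glb_lt; lra).
  enough (HEx : E x) by (pose proof (Hub x HEx); lra).
  unfold E; split; [lra |]. intros s Hs.
  destruct (Rlt_le_dec s m) as [hs|hs]; [apply Hbelow; lra |].
  specialize (Hnear s ltac:(rewrite Rabs_right; lra)). apply Rabs_lt_between in Hnear. lra.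
Qed.

(* A solution of [A' = L^2 / (2 A) - g] cannot reach [0]: while [A] is small
   and positive, its derivative is positive. *)
Lemma ode_barrier_nonneg (A L : R -> R) (g T : R) : g > 0 -> A 0 > 0 ->
  (forall e, e > 0 -> exists d, d > 0 /\ forall t, 0 <= t < d -> t < T -> Rabs (A t - A 0) < e) ->
  (forall t, 0 < t < T -> is_derive A t (L t ^ 2 / (2 * A t) - g)) ->
  (forall t, 0 < t < T -> L t > 0) ->
  (forall t, 0 < t < T -> continuity_pt L t) ->
  forall t, 0 < t < T -> A t >= 0.
Proof.
  intros Hg HA0 Hcont0 Hder HL HLcont t1 Ht1.
  destruct (Rle_lt_dec 0 (A t1)) as [h|Hneg]; [lra | exfalso].
  assert (HAcont : forall t, 0 < t < T -> continuity_pt A t)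
    by (intros t Ht; apply ex_derive_continuity_pt; eexists; apply Hder, Ht).
  destruct (first_nonpositive_time A t1 ltac:(lra) HA0 ltac:(lra)) as [m [Hm [HAm Hbelow]]].
  { intros e He. destruct (Hcont0 e He) as [d [Hd Hnear]]. exists d. split; auto.
    intros t Ht Htt. apply Hnear; lra. }
  { intros t Ht. apply HAcont. lra. }
  set (Lm := L m). assert (HLm : Lm > 0) by (apply HL; lra).
  destruct (continuity_pt_eps L m (HLcont m ltac:(lra)) (Lm / 2) ltac:(lra)) as [d1 [Hd1 HLnear]].
  set (eta := (Lm / 2) ^ 2 / (2 * g)).
  assert (Heta : eta > 0) by (unfold eta; apply Rdiv_lt_0_compat; nra).
  destruct (continuity_pt_eps A m (HAcont m ltac:(lra)) eta Heta) as [d2 [Hd2 HAnear]].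
  assert (Hd : Rmin (Rmin d1 d2) m > 0) by (repeat apply Rmin_glb_lt; lra).
  pose proof (Rmin_l (Rmin d1 d2) m). pose proof (Rmin_r (Rmin d1 d2) m).
  pose proof (Rmin_l d1 d2). pose proof (Rmin_r d1 d2).
  set (d := Rmin (Rmin d1 d2) m) in *.
  destruct (MVT_cor2 A (fun s => L s ^ 2 / (2 * A s) - g) (m - d / 2) m ltac:(lra)) as [xi [Hmvt Hxi]].
  { intros c Hc. apply is_derive_Reals, Hder. lra. }
  assert (HAxi : 0 < A xi < eta).
  { split; [apply Hbelow; lra |].
    specialize (HAnear xi ltac:(rewrite Rabs_left; lra)). apply Rabs_lt_between in HAnear. lra. }
  assert (HLxi : L xi > Lm / 2).
  { specialize (HLnear xi ltac:(rewrite Rabs_left; lra)). apply Rabs_lt_between in HLnear. fold Lm in HLnear. lra. }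
  assert (Hslope : L xi ^ 2 / (2 * A xi) - g > 0).
  { assert (L xi ^ 2 / (2 * A xi) > (Lm / 2) ^ 2 / (2 * eta)).
    { apply (Rlt_trans _ ((Lm / 2) ^ 2 / (2 * A xi))).
      - unfold Rdiv. apply Rmult_lt_compat_l; [nra | apply Rinv_lt_contravar; nra].
      - unfold Rdiv. apply Rmult_lt_compat_r; [apply Rinv_0_lt_compat; lra | nra]. }
    assert ((Lm / 2) ^ 2 / (2 * eta) = g) by (unfold eta; field; split; nra).
    lra. }
  assert (A (m - d / 2) > 0) by (apply Hbelow; lra).
  assert (A m - A (m - d / 2) > 0) by (rewrite Hmvt; apply Rmult_lt_0_compat; lra).
  lra.
Qed.

Lemma periodic_value_in_01 (f : R -> R) : (forall u, f (u + 1) = f u) ->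
  forall v, exists w, 0 <= w <= 1 /\ f v = f w.
Proof.
  intros Hf.
  assert (Hplus : forall m u, f (u + INR m) = f u).
  { induction m as [|m IH]; intros u; [simpl; f_equal; ring |].
    rewrite S_INR, <- Rplus_assoc, Hf. apply IH. }
  intros v. exists (frac_part v). pose proof (base_fp v) as [Hfp0 Hfp1]. split; [lra |].
  unfold frac_part. destruct (Z.le_gt_cases 0 (Int_part v)) as [Hz|Hz].
  - destruct (Z_of_nat_complete _ Hz) as [m ->].
    rewrite <- INR_IZR_INZ, <- (Hplus m (v - INR m)). f_equal; ring.
  - destruct (Z_of_nat_complete (- Int_part v) ltac:(lia)) as [m Hm].
    replace (Int_part v) with (- Z.of_nat m)%Z by lia. rewrite opp_IZR, <- INR_IZR_INZ.
    rewrite <- (Hplus m). f_equal; ring.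
Qed.

Lemma ValAdh_in_compact (un : nat -> R) (K : R -> Prop) l :
  compact K -> (forall k, K (un k)) -> ValAdh un l -> K l.
Proof.
  intros HK Hun Hl. apply (adherence_P2 _ (compact_P2 _ HK)).
  intros V HV. destruct (Hl V 0%nat HV) as [p [_ Hp]]. exists (un p). split; auto.
Qed.

Lemma pdu_is_derive (F : R -> R -> R) u t l : is_derive (fun v => F v t) u l -> pdu F u t = l.
Proof.
  intros H. unfold pdu.
  assert (Hex : exists l, derivable_pt_lim (fun v => F v t) u l) by (exists l; now apply is_derive_Reals).
  apply (is_derive_eq (fun v => F v t) u); [apply is_derive_Reals, (epsilon_spec _ _ Hex) | exact H].
Qed.

Lemma pdt_is_derive (F : R -> R -> R) u t l : is_derive (fun s => F u s) t l -> pdt F u t = l.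
Proof.
  intros H. unfold pdt.
  assert (Hex : exists l, derivable_pt_lim (fun s => F u s) t l) by (exists l; now apply is_derive_Reals).
  apply (is_derive_eq (fun s => F u s) t); [apply is_derive_Reals, (epsilon_spec _ _ Hex) | exact H].
Qed.

Lemma Rint_RInt (f : R -> R) a b : ex_RInt f a b -> Rint f a b = RInt f a b.
Proof.
  intros Hex. apply ex_RInt_Reals_0 in Hex as pr. unfold Rint.
  assert (Hv : exists v, exists pr : Riemann_integrable f a b, RiemannInt pr = v) by (exists (RiemannInt pr); now exists pr).
  destruct (epsilon_spec (inhabits 0) _ Hv) as [pr' <-]. symmetry. apply RInt_Reals.
Qed.

Lemma ex_RInt_01 (f : R -> R) : (forall x, 0 <= x <= 1 -> ex_derive f x) -> ex_RInt f 0 1.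
Proof.
  intros H. apply (@ex_RInt_continuous R_CompleteNormedModule). intros x Hx.
  rewrite Rmin_left, Rmax_right in Hx by lra. apply (@ex_derive_continuous R_AbsRing R_NormedModule), H, Hx.
Qed.

Lemma RInt_plus_const (f : R -> R) c : ex_RInt f 0 1 -> RInt (fun x => f x + c) 0 1 = RInt f 0 1 + c.
Proof.
  intros H. apply is_RInt_unique.
  replace (RInt f 0 1 + c) with (plus (RInt f 0 1) (scal (1 - 0) c)) by (cbn; unfold mult, plus; cbn; ring).
  apply (@is_RInt_plus R_NormedModule); [apply (@RInt_correct R_CompleteNormedModule), H | apply (@is_RInt_const R_NormedModule)].
Qed.

(* Compare [t] with a time [tau] close to [T] where [K tau] is large, then let [e] tend to [0]. *)
Lemma blowup_lower_bound (K : R -> R) (T : R) :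
  (forall t, 0 <= t < T -> K t > 0) ->
  (forall e t tau, e > 0 -> 0 <= t -> t <= tau -> tau < T ->
     / K t ^ 2 + (2 + e) * t <= / K tau ^ 2 + (2 + e) * tau) ->
  (forall M delta, delta > 0 -> exists t, 0 <= t < T /\ T - delta < t /\ K t > M) ->
  forall t, 0 <= t < T -> K t >= 1 / sqrt (2 * (T - t)).
Proof.
  intros Kpos Hmono Hblow t Ht.
  assert (Hsq : / K t ^ 2 <= 2 * (T - t)).
  { apply Rle_plus_epsilon. intros eps Heps.
    set (e := eps / (2 * (T - t))).
    assert (He : e > 0) by (unfold e; apply Rdiv_lt_0_compat; lra).
    assert (HeT : e * (T - t) = eps / 2) by (unfold e; field; lra).
    destruct (Hblow (1 + 2 / eps) (T - t) ltac:(lra)) as [tau [Htau [Htau' HKtau]]].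
    assert (H2eps : 2 / eps > 0) by (apply Rdiv_lt_0_compat; lra).
    assert (Hinv : / K tau ^ 2 <= eps / 2).
    { replace (eps / 2) with (/ (2 / eps)) by (field; lra).
      assert (K tau <= K tau ^ 2) by nra.
      apply Rlt_le, Rinv_lt_contravar; [apply Rmult_lt_0_compat |]; nra. }
    pose proof (Hmono e t tau He ltac:(lra) ltac:(lra) ltac:(lra)).
    assert ((2 + e) * (tau - t) <= (2 + e) * (T - t)) by (apply Rmult_le_compat_l; lra).
    nra. }
  pose proof (Kpos t Ht) as HK.
  assert (Hinv : / (2 * (T - t)) <= K t ^ 2).
  { rewrite <- (Rinv_inv (K t ^ 2)). apply Rinv_le_contravar; [apply Rinv_0_lt_compat; nra | exact Hsq]. }
  apply Rle_ge. rewrite <- (sqrt_pow2 (K t)) by lra.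
  unfold Rdiv. rewrite Rmult_1_l, <- sqrt_inv. apply sqrt_le_1_alt, Hinv.
Qed.

(** * Joint continuity on [R x [0, T)] *)

Section JointContinuity.
Variable T : R.

Definition jcont (F : R -> R -> R) u0 t0 := forall eps, eps > 0 -> exists delta, delta > 0 /\
  forall u t, 0 <= t < T -> Rabs (u - u0) < delta -> Rabs (t - t0) < delta ->
    Rabs (F u t - F u0 t0) < eps.

Lemma jcont_ext F G u0 t0 : (forall u t, F u t = G u t) -> jcont F u0 t0 -> jcont G u0 t0.
Proof.
  intros E H eps He. destruct (H eps He) as [d [Hd HF]]. exists d; split; auto.
  intros; rewrite <- !E; auto.
Qed.

Lemma jcont_plus F G u0 t0 : jcont F u0 t0 -> jcont G u0 t0 -> jcont (fun u t => F u t + G u t) u0 t0.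
Proof.
  intros HF HG eps He.
  destruct (HF (eps / 2) ltac:(lra)) as [d1 [Hd1 H1]]. destruct (HG (eps / 2) ltac:(lra)) as [d2 [Hd2 H2]].
  exists (Rmin d1 d2). split; [apply Rmin_glb_lt; auto |]. intros u t Ht Hu Htt.
  pose proof (Rmin_l d1 d2). pose proof (Rmin_r d1 d2).
  specialize (H1 u t Ht ltac:(lra) ltac:(lra)). specialize (H2 u t Ht ltac:(lra) ltac:(lra)).
  replace (F u t + G u t - (F u0 t0 + G u0 t0)) with ((F u t - F u0 t0) + (G u t - G u0 t0)) by ring.
  pose proof (Rabs_triang (F u t - F u0 t0) (G u t - G u0 t0)). lra.
Qed.

Lemma jcont_comp (h : R -> R) F u0 t0 : jcont F u0 t0 -> continuity_pt h (F u0 t0) ->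
  jcont (fun u t => h (F u t)) u0 t0.
Proof.
  intros HF Hh eps He. destruct (continuity_pt_eps h _ Hh eps He) as [d1 [Hd1 H1]].
  destruct (HF d1 Hd1) as [d [Hd H]]. exists d. split; [exact Hd |].
  intros u t Ht Hu Htt. apply H1, H; auto.
Qed.

Lemma jcont_opp F u0 t0 : jcont F u0 t0 -> jcont (fun u t => - F u t) u0 t0.
Proof. intros HF. apply (jcont_comp Ropp); [exact HF | apply continuity_pt_opp, continuity_pt_id]. Qed.

Lemma jcont_minus F G u0 t0 : jcont F u0 t0 -> jcont G u0 t0 -> jcont (fun u t => F u t - G u t) u0 t0.
Proof. intros. apply jcont_plus; auto. apply jcont_opp; auto. Qed.

Lemma jcont_mult F G u0 t0 : jcont F u0 t0 -> jcont G u0 t0 -> jcont (fun u t => F u t * G u t) u0 t0.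
Proof.
  intros HF HG.
  assert (Hsq : forall H, jcont H u0 t0 -> jcont (fun u t => H u t ^ 2 / 4) u0 t0).
  { intros H HH. apply (jcont_comp (fun x => x ^ 2 / 4)); auto.
    apply ex_derive_continuity_pt. auto_derive. auto. }
  apply (jcont_ext (fun u t => (F u t + G u t) ^ 2 / 4 - (F u t - G u t) ^ 2 / 4)); [intros; field |].
  apply jcont_minus; apply Hsq; [apply jcont_plus | apply jcont_minus]; auto.
Qed.

Lemma jcont_uniform F t0 : 0 <= t0 < T -> (forall u, 0 <= u <= 1 -> jcont F u t0) ->
  forall eps, eps > 0 -> exists delta, delta > 0 /\
    forall u t, 0 <= t < T -> Rabs (t - t0) < delta -> 0 <= u <= 1 -> Rabs (F u t - F u t0) < eps.
Proof.
  intros Ht0 HF eps He. apply NNPP. intros Hn.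
  set (bad := fun (k : nat) (p : R * R) => 0 <= snd p < T /\ Rabs (snd p - t0) < / (INR k + 1) /\
    0 <= fst p <= 1 /\ Rabs (F (fst p) (snd p) - F (fst p) t0) >= eps).
  assert (Hbad : forall k, exists p, bad k p).
  { intros k. apply NNPP. intros Hnp. apply Hn. exists (/ (INR k + 1)). split.
    - apply Rlt_gt, Rinv_0_lt_compat. pose proof (pos_INR k). lra.
    - intros u t Ht Htt Hu. apply Rnot_le_lt. intros Hge. apply Hnp. exists (u, t). unfold bad; simpl. auto with real. }
  set (p := fun k => epsilon (inhabits (0, 0)) (bad k)).
  assert (Hp : forall k, bad k (p k)) by (intros k; apply (epsilon_spec _ _ (Hbad k))).
  destruct (Bolzano_Weierstrass (fun k => fst (p k)) _ (compact_P3 0 1) (fun k => proj1 (proj2 (proj2 (Hp k)))))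
    as [l Hl].
  pose proof (ValAdh_in_compact _ _ l (compact_P3 0 1) (fun k => proj1 (proj2 (proj2 (Hp k)))) Hl) as Hl01.
  destruct (HF l Hl01 (eps / 2) ltac:(lra)) as [d [Hd Hnear]].
  destruct (archimed_cor1 d Hd) as [N [HN HN0]].
  destruct (Hl (disc l (mkposreal _ Hd)) N) as [k [Hk Hdisc]].
  { exists (mkposreal _ Hd). intros y Hy; exact Hy. }
  unfold disc in Hdisc; simpl in Hdisc.
  destruct (Hp k) as [Ht [Htt [Hu Hge]]].
  assert (/ (INR k + 1) <= / INR N).
  { apply Rinv_le_contravar; [apply lt_0_INR; auto |]. apply le_INR in Hk. lra. }
  pose proof (Hnear (fst (p k)) (snd (p k)) Ht Hdisc ltac:(lra)) as E1.
  pose proof (Hnear (fst (p k)) t0 Ht0 Hdisc ltac:(rewrite Rminus_diag, Rabs_R0; lra)) as E2.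
  pose proof (Rabs_triang (F (fst (p k)) (snd (p k)) - F l t0) (- (F (fst (p k)) t0 - F l t0))) as Htri.
  rewrite Rabs_Ropp in Htri.
  replace (F (fst (p k)) (snd (p k)) - F l t0 + - (F (fst (p k)) t0 - F l t0))
    with (F (fst (p k)) (snd (p k)) - F (fst (p k)) t0) in Htri by ring.
  lra.
Qed.

Lemma RInt_jcont F t0 : 0 <= t0 < T -> (forall u, 0 <= u <= 1 -> jcont F u t0) ->
  (forall t, 0 <= t < T -> ex_RInt (fun u => F u t) 0 1) ->
  forall e, e > 0 -> exists d, d > 0 /\ forall t, 0 <= t < T -> Rabs (t - t0) < d ->
    Rabs (RInt (fun u => F u t) 0 1 - RInt (fun u => F u t0) 0 1) < e.
Proof.
  intros Ht0 HF Hex e He.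
  destruct (jcont_uniform F t0 Ht0 HF (e / 2) ltac:(lra)) as [d [Hd Hnear]].
  exists d. split; auto. intros t Ht Htt.
  assert (Hup : RInt (fun u => F u t) 0 1 <= RInt (fun u => F u t0 + e / 2) 0 1).
  { apply RInt_le; [lra | auto | apply (@ex_RInt_plus R_NormedModule); auto; apply ex_RInt_const |].
    intros x Hx. specialize (Hnear x t Ht Htt ltac:(lra)). apply Rabs_lt_between in Hnear. lra. }
  assert (Hlo : RInt (fun u => F u t0 + - (e / 2)) 0 1 <= RInt (fun u => F u t) 0 1).
  { apply RInt_le; [lra | apply (@ex_RInt_plus R_NormedModule); auto; apply ex_RInt_const | auto |].
    intros x Hx. specialize (Hnear x t Ht Htt ltac:(lra)). apply Rabs_lt_between in Hnear. lra. }
  rewrite RInt_plus_const in Hup, Hlo by auto.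
  apply Rabs_lt_between. lra.
Qed.
End JointContinuity.

(** * Smooth families of closed curves *)

Lemma is_derive_shift1 (f : R -> R) u l : is_derive f (u + 1) l -> is_derive (fun v => f (v + 1)) u l.
Proof.
  intros H. rewrite <- (scal_one l).
  apply (is_derive_comp f (fun v => v + 1)); [exact H |]. auto_derive; auto; ring.
Qed.

Lemma locally_in_interval (a b t0 : R) (P : R -> Prop) : a < t0 < b ->
  (forall x, a < x < b -> P x) -> locally t0 P.
Proof.
  intros Ht HP.
  assert (Hd : 0 < Rmin (t0 - a) (b - t0)) by (apply Rmin_glb_lt; lra).
  exists (mkposreal _ Hd). intros s Hs. cbn in Hs. unfold AbsRing_ball, abs, minus, plus, opp in Hs; cbn in Hs.
  apply HP. pose proof (Rmin_l (t0 - a) (b - t0)); pose proof (Rmin_r (t0 - a) (b - t0)).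
  apply Rabs_lt_between in Hs. lra.
Qed.

(* [kappa_t = kappa_uu / S^2 + kappa^2 (kappa - c)] at a critical point of
   [kappa] on a curve with normal velocity [kappa - c]: [xut, yut, xuut, yuut]
   are the mixed derivatives of the curve computed from that velocity (with
   [kappa_u = 0]).  The identity only holds modulo [S^2 = xu^2 + yu^2]; the
   cofactor below was obtained by polynomial division. *)
Lemma curvature_evolution_at_critical_point (xu yu xuu yuu xuuu yuuu S c kuu xut yut xuut yuut : R) :
  S > 0 -> S ^ 2 = xu ^ 2 + yu ^ 2 ->
  let kappa := (xu * yuu - yu * xuu) / S ^ 3 in
  let V := kappa - c in
  let Su := (xu * xuu + yu * yuu) / S in
  let Suu := (xuu * xuu + xu * xuuu + yuu * yuu + yu * yuuu) / S - (xu * xuu + yu * yuu) * Su / S ^ 2 in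
  xut = V * (- yuu / S + yu * Su / S ^ 2) ->
  yut = V * (xuu / S - xu * Su / S ^ 2) ->
  xuut = kuu * (- yu / S) + V * (- yuuu / S + 2 * yuu * Su / S ^ 2 + yu * Suu / S ^ 2 - 2 * yu * Su ^ 2 / S ^ 3) ->
  yuut = kuu * (xu / S) + V * (xuuu / S - 2 * xuu * Su / S ^ 2 - xu * Suu / S ^ 2 + 2 * xu * Su ^ 2 / S ^ 3) ->
  (xut * yuu + xu * yuut - yut * xuu - yu * xuut) / S ^ 3
    - 3 * (xu * yuu - yu * xuu) * ((xu * xut + yu * yut) / S) / S ^ 4
  = kuu / S ^ 2 + kappa ^ 2 * V.
Proof.
  intros HS Hrel kappa V Su Suu -> -> -> ->. unfold V, kappa, Suu, Su.
  set (a := xu) in *. set (b := yu) in *. set (p := xuu). set (q := yuu). set (r := xuuu). set (w := yuuu).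
  apply Rminus_diag_uniq.
  transitivity ((S ^ 2 - a ^ 2 - b ^ 2) * ((-1)*S^7*kuu + (1)*q^2*S^5*c + (-1)*a*r*S^5*c + (1)*p^2*S^5*c + (-1)*b*w*S^5*c + (3)*b^2*q^2*S^3*c + (3)*a^2*p^2*S^3*c + (6)*a*b*p*q*S^3*c + (-1)*a*q^3*S^2 + (1)*b*p*q^2*S^2 + (1)*a^2*q*r*S^2 + (-1)*a*b*p*r*S^2 + (-1)*a*p^2*q*S^2 + (1)*b*p^3*S^2 + (1)*a*b*q*w*S^2 + (-1)*b^2*p*w*S^2 + (-3)*a*b^2*q^3 + (3)*b^3*p*q^2 + (-3)*a^3*p^2*q + (3)*a^2*b*p^3 + (-6)*a^2*b*p*q^2 + (6)*a*b^2*p^2*q) / S ^ 11).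
  - field. lra.
  - rewrite Hrel. unfold Rdiv. ring.
Qed.

Section SmoothCurve.
Variables (X Y : R -> R -> R) (T : R) (DX DY : nat -> nat -> R -> R -> R).
Hypothesis HT : 0 < T.
Hypothesis DX0 : forall u t, 0 <= t < T -> DX 0%nat 0%nat u t = X u t.
Hypothesis DY0 : forall u t, 0 <= t < T -> DY 0%nat 0%nat u t = Y u t.
Hypothesis DXu : forall i j u t, 0 <= t < T -> derivable_pt_lim (fun v => DX i j v t) u (DX (S i) j u t).
Hypothesis DYu : forall i j u t, 0 <= t < T -> derivable_pt_lim (fun v => DY i j v t) u (DY (S i) j u t).
Hypothesis DXt : forall i j u t, 0 < t < T -> derivable_pt_lim (fun s => DX i j u s) t (DX i (S j) u t).
Hypothesis DYt : forall i j u t, 0 < t < T -> derivable_pt_lim (fun s => DY i j u s) t (DY i (S j) u t).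
Hypothesis DXc : forall i j u t, 0 <= t < T -> jcont T (DX i j) u t.
Hypothesis DYc : forall i j u t, 0 <= t < T -> jcont T (DY i j) u t.
Hypothesis Hper : forall u t, 0 <= t < T -> X (u + 1) t = X u t /\ Y (u + 1) t = Y u t.
Hypothesis Hspeed : forall u t, 0 <= t < T -> speed X Y u t > 0.

Lemma DX_u i j u t : 0 <= t < T -> is_derive (fun v => DX i j v t) u (DX (S i) j u t).
Proof. intros; apply is_derive_Reals; auto. Qed.
Lemma DY_u i j u t : 0 <= t < T -> is_derive (fun v => DY i j v t) u (DY (S i) j u t).
Proof. intros; apply is_derive_Reals; auto. Qed.
Lemma DX_t i j u t : 0 < t < T -> is_derive (fun s => DX i j u s) t (DX i (S j) u t).
Proof. intros; apply is_derive_Reals; auto. Qed.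
Lemma DY_t i j u t : 0 < t < T -> is_derive (fun s => DY i j u s) t (DY i (S j) u t).
Proof. intros; apply is_derive_Reals; auto. Qed.

Lemma pdu_X u t : 0 <= t < T -> pdu X u t = DX 1%nat 0%nat u t.
Proof. intros Ht. apply pdu_is_derive. eapply is_derive_ext; [| apply (DX_u 0 0 u t Ht)]. intros v; apply DX0, Ht. Qed.
Lemma pdu_Y u t : 0 <= t < T -> pdu Y u t = DY 1%nat 0%nat u t.
Proof. intros Ht. apply pdu_is_derive. eapply is_derive_ext; [| apply (DY_u 0 0 u t Ht)]. intros v; apply DY0, Ht. Qed.
Lemma pdu_pdu_X u t : 0 <= t < T -> pdu (pdu X) u t = DX 2%nat 0%nat u t.
Proof. intros Ht. apply pdu_is_derive. eapply is_derive_ext; [| apply (DX_u 1 0 u t Ht)]. intros v; cbn; rewrite pdu_X; auto. Qed.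
Lemma pdu_pdu_Y u t : 0 <= t < T -> pdu (pdu Y) u t = DY 2%nat 0%nat u t.
Proof. intros Ht. apply pdu_is_derive. eapply is_derive_ext; [| apply (DY_u 1 0 u t Ht)]. intros v; cbn; rewrite pdu_Y; auto. Qed.

Lemma pdt_X u t : 0 < t < T -> pdt X u t = DX 0%nat 1%nat u t.
Proof.
  intros Ht. apply pdt_is_derive. eapply is_derive_ext_loc; [| apply (DX_t 0 0 u t Ht)].
  apply (locally_in_interval 0 T); auto. intros s Hs. apply DX0. lra.
Qed.
Lemma pdt_Y u t : 0 < t < T -> pdt Y u t = DY 0%nat 1%nat u t.
Proof.
  intros Ht. apply pdt_is_derive. eapply is_derive_ext_loc; [| apply (DY_t 0 0 u t Ht)].
  apply (locally_in_interval 0 T); auto. intros s Hs. apply DY0. lra.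
Qed.

Definition xu u t := DX 1%nat 0%nat u t.
Definition yu u t := DY 1%nat 0%nat u t.
Definition xuu u t := DX 2%nat 0%nat u t.
Definition yuu u t := DY 2%nat 0%nat u t.
Definition spd u t := sqrt (xu u t * xu u t + yu u t * yu u t).
Definition kappa u t := (xu u t * yuu u t - yu u t * xuu u t) / spd u t ^ 3.

Lemma speed_spd u t : 0 <= t < T -> speed X Y u t = spd u t.
Proof. intros Ht. unfold speed, spd. rewrite pdu_X, pdu_Y by auto. f_equal. unfold xu, yu. ring. Qed.
Lemma spd_pos u t : 0 <= t < T -> spd u t > 0.
Proof. intros Ht. rewrite <- speed_spd; auto. Qed.
Lemma spd2_pos u t : 0 <= t < T -> xu u t * xu u t + yu u t * yu u t > 0.
Proof.
  intros Ht. pose proof (spd_pos u t Ht) as H. unfold spd in H.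
  destruct (Rle_lt_dec (xu u t * xu u t + yu u t * yu u t) 0) as [h|h]; auto.
  rewrite sqrt_neg_0 in H; auto; lra.
Qed.
Lemma curv_kappa u t : 0 <= t < T -> curv X Y u t = kappa u t.
Proof.
  intros Ht. unfold curv, kappa. rewrite pdu_X, pdu_Y, pdu_pdu_X, pdu_pdu_Y by auto.
  fold (speed X Y u t). rewrite speed_spd; auto.
Qed.
Lemma nu1_eq u t : 0 <= t < T -> nu1 X Y u t = - yu u t / spd u t.
Proof. intros Ht. unfold nu1. rewrite pdu_Y, speed_spd by auto. reflexivity. Qed.
Lemma nu2_eq u t : 0 <= t < T -> nu2 X Y u t = xu u t / spd u t.
Proof. intros Ht. unfold nu2. rewrite pdu_X, speed_spd by auto. reflexivity. Qed.

Ltac ex_derive_DXY := match goal with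
  | |- ex_derive (fun x => DX ?i ?j x ?t) ?v => exists (DX (S i) j v t); apply DX_u; lra
  | |- ex_derive (fun x => DY ?i ?j x ?t) ?v => exists (DY (S i) j v t); apply DY_u; lra
  | |- ex_derive (fun x => DX ?i ?j ?u x) ?v => exists (DX i (S j) u v); apply DX_t; lra
  | |- ex_derive (fun x => DY ?i ?j ?u x) ?v => exists (DY i (S j) u v); apply DY_t; lra
  end.
Ltac rewrite_Derive_DXY := repeat match goal with
  | |- context [Derive (fun x => DX ?i ?j x ?t) ?v] =>
      rewrite (Derive_of_is_derive (fun x => DX i j x t) v (DX (S i) j v t)) by (apply DX_u; lra)
  | |- context [Derive (fun x => DY ?i ?j x ?t) ?v] =>
      rewrite (Derive_of_is_derive (fun x => DY i j x t) v (DY (S i) j v t)) by (apply DY_u; lra)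
  | |- context [Derive (fun x => DX ?i ?j ?u x) ?v] =>
      rewrite (Derive_of_is_derive (fun x => DX i j u x) v (DX i (S j) u v)) by (apply DX_t; lra)
  | |- context [Derive (fun x => DY ?i ?j ?u x) ?v] =>
      rewrite (Derive_of_is_derive (fun x => DY i j u x) v (DY i (S j) u v)) by (apply DY_t; lra)
  end.
Ltac side_conditions_DXY :=
  repeat split; try ex_derive_DXY; try lra; try (apply Rgt_not_eq; repeat apply Rmult_lt_0_compat; lra).

Definition spd_u u t := (xu u t * xuu u t + yu u t * yuu u t) / spd u t.
Definition kappa_u u t := ((xu u t * DY 3%nat 0%nat u t - yu u t * DX 3%nat 0%nat u t) * spd u t
   - 3 * (xu u t * yuu u t - yu u t * xuu u t) * spd_u u t) / spd u t ^ 4.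
Definition kappa_uu u t := Derive (fun v => kappa_u v t) u.

Lemma kappa_u_derive u t : 0 <= t < T -> is_derive (fun v => kappa v t) u (kappa_u u t).
Proof.
  intros Ht. pose proof (spd2_pos u t Ht). pose proof (spd_pos u t Ht).
  unfold kappa, kappa_u, spd_u, spd, xu, yu, xuu, yuu in *.
  auto_derive; [side_conditions_DXY |]. rewrite_Derive_DXY. simpl. field. lra.
Qed.

Ltac ex_derive_curve := first [ex_derive_DXY | match goal with
  | |- ex_derive (fun x => kappa x ?t) ?v => exists (kappa_u v t); apply kappa_u_derive; lra end].
Ltac rewrite_Derive_curve := rewrite_Derive_DXY; repeat match goal with
  | |- context [Derive (fun x => kappa x ?t) ?v] =>
      rewrite (Derive_of_is_derive (fun x => kappa x t) v (kappa_u v t)) by (apply kappa_u_derive; lra)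
  end.
Ltac side_conditions_curve :=
  repeat split; try ex_derive_curve; try assumption; try lra; try (apply Rgt_not_eq; repeat apply Rmult_lt_0_compat; lra).
Ltac ex_derive_curve_at Ht := intros;
  match goal with |- ex_derive _ ?u =>
    pose proof (spd2_pos u _ Ht); pose proof (spd_pos u _ Ht);
    unfold spd, xu, yu, xuu, yuu in *; auto_derive; side_conditions_curve end.

Lemma kappa_u_ex_derive u t : 0 <= t < T -> ex_derive (fun v => kappa_u v t) u.
Proof. intros Ht. unfold kappa_u, spd_u. ex_derive_curve_at Ht. Qed.

Definition velx c u t := (kappa u t - c) * (- yu u t / spd u t).
Definition vely c u t := (kappa u t - c) * (xu u t / spd u t).
Definition velx_u c u t := kappa_u u t * (- yu u t / spd u t)
  + (kappa u t - c) * (- yuu u t / spd u t + yu u t * spd_u u t / spd u t ^ 2).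
Definition vely_u c u t := kappa_u u t * (xu u t / spd u t)
  + (kappa u t - c) * (xuu u t / spd u t - xu u t * spd_u u t / spd u t ^ 2).

Lemma velx_u_derive c u t : 0 <= t < T -> is_derive (fun v => velx c v t) u (velx_u c u t).
Proof.
  intros Ht. pose proof (spd2_pos u t Ht). pose proof (spd_pos u t Ht).
  unfold velx, velx_u, spd_u, spd, xu, yu, xuu, yuu in *.
  auto_derive; [side_conditions_curve |]. rewrite_Derive_curve. simpl. field. lra.
Qed.
Lemma vely_u_derive c u t : 0 <= t < T -> is_derive (fun v => vely c v t) u (vely_u c u t).
Proof.
  intros Ht. pose proof (spd2_pos u t Ht). pose proof (spd_pos u t Ht).
  unfold vely, vely_u, spd_u, spd, xu, yu, xuu, yuu in *.
  auto_derive; [side_conditions_curve |]. rewrite_Derive_curve. simpl. field. lra.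
Qed.

Definition spd_uu u t := (xuu u t * xuu u t + xu u t * DX 3%nat 0%nat u t + yuu u t * yuu u t
  + yu u t * DY 3%nat 0%nat u t) / spd u t - (xu u t * xuu u t + yu u t * yuu u t) * spd_u u t / spd u t ^ 2.
Definition velx_uu c u t := kappa_uu u t * (- yu u t / spd u t)
  + 2 * kappa_u u t * (- yuu u t / spd u t + yu u t * spd_u u t / spd u t ^ 2)
  + (kappa u t - c) * (- DY 3%nat 0%nat u t / spd u t + 2 * yuu u t * spd_u u t / spd u t ^ 2
      + yu u t * spd_uu u t / spd u t ^ 2 - 2 * yu u t * spd_u u t ^ 2 / spd u t ^ 3).
Definition vely_uu c u t := kappa_uu u t * (xu u t / spd u t)
  + 2 * kappa_u u t * (xuu u t / spd u t - xu u t * spd_u u t / spd u t ^ 2)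
  + (kappa u t - c) * (DX 3%nat 0%nat u t / spd u t - 2 * xuu u t * spd_u u t / spd u t ^ 2
      - xu u t * spd_uu u t / spd u t ^ 2 + 2 * xu u t * spd_u u t ^ 2 / spd u t ^ 3).

Lemma velx_uu_derive c u t : 0 <= t < T -> is_derive (fun v => velx_u c v t) u (velx_uu c u t).
Proof.
  intros Ht. pose proof (spd2_pos u t Ht). pose proof (spd_pos u t Ht). pose proof (kappa_u_ex_derive u t Ht).
  unfold velx_u, velx_uu, kappa_uu, spd_uu, spd_u, spd, xu, yu, xuu, yuu in *.
  auto_derive; [side_conditions_curve |]. rewrite_Derive_curve. simpl. field. lra.
Qed.
Lemma vely_uu_derive c u t : 0 <= t < T -> is_derive (fun v => vely_u c v t) u (vely_uu c u t).
Proof.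
  intros Ht. pose proof (spd2_pos u t Ht). pose proof (spd_pos u t Ht). pose proof (kappa_u_ex_derive u t Ht).
  unfold vely_u, vely_uu, kappa_uu, spd_uu, spd_u, spd, xu, yu, xuu, yuu in *.
  auto_derive; [side_conditions_curve |]. rewrite_Derive_curve. simpl. field. lra.
Qed.

Definition kappa_t u t :=
  (DX 1%nat 1%nat u t * yuu u t + xu u t * DY 2%nat 1%nat u t
     - DY 1%nat 1%nat u t * xuu u t - yu u t * DX 2%nat 1%nat u t) / spd u t ^ 3
  - 3 * (xu u t * yuu u t - yu u t * xuu u t)
      * ((xu u t * DX 1%nat 1%nat u t + yu u t * DY 1%nat 1%nat u t) / spd u t) / spd u t ^ 4.

Lemma kappa_t_derive u t : 0 < t < T -> is_derive (fun s => kappa u s) t (kappa_t u t).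
Proof.
  intros Ht. pose proof (spd2_pos u t ltac:(lra)). pose proof (spd_pos u t ltac:(lra)).
  unfold kappa_t, kappa, spd, xu, yu, xuu, yuu in *.
  auto_derive; [side_conditions_DXY |]. rewrite_Derive_DXY. simpl. field. lra.
Qed.

Lemma kappa_t_at_critical c u t : 0 < t < T ->
  (forall v, DX 0%nat 1%nat v t = velx c v t) -> (forall v, DY 0%nat 1%nat v t = vely c v t) ->
  kappa_u u t = 0 ->
  kappa_t u t = kappa_uu u t / spd u t ^ 2 + kappa u t ^ 2 * (kappa u t - c).
Proof.
  intros Ht Hx Hy Hcrit. assert (Ht' : 0 <= t < T) by lra.
  assert (Hxu : forall v, DX 1%nat 1%nat v t = velx_u c v t).
  { intros v. apply (is_derive_eq (fun v => DX 0%nat 1%nat v t) v); [apply DX_u, Ht' |].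
    eapply is_derive_ext; [| apply velx_u_derive, Ht']. intros w; cbn; rewrite Hx; reflexivity. }
  assert (Hyu : forall v, DY 1%nat 1%nat v t = vely_u c v t).
  { intros v. apply (is_derive_eq (fun v => DY 0%nat 1%nat v t) v); [apply DY_u, Ht' |].
    eapply is_derive_ext; [| apply vely_u_derive, Ht']. intros w; cbn; rewrite Hy; reflexivity. }
  assert (Hxuu : DX 2%nat 1%nat u t = velx_uu c u t).
  { apply (is_derive_eq (fun v => DX 1%nat 1%nat v t) u); [apply DX_u, Ht' |].
    eapply is_derive_ext; [| apply velx_uu_derive, Ht']. intros w; cbn; rewrite Hxu; reflexivity. }
  assert (Hyuu : DY 2%nat 1%nat u t = vely_uu c u t).
  { apply (is_derive_eq (fun v => DY 1%nat 1%nat v t) u); [apply DY_u, Ht' |].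
    eapply is_derive_ext; [| apply vely_uu_derive, Ht']. intros w; cbn; rewrite Hyu; reflexivity. }
  assert (Hrel : spd u t ^ 2 = xu u t ^ 2 + yu u t ^ 2).
  { pose proof (spd2_pos u t Ht'). unfold spd. rewrite <- Rsqr_pow2, Rsqr_sqrt by lra. ring. }
  pose proof (curvature_evolution_at_critical_point (xu u t) (yu u t) (xuu u t) (yuu u t)
    (DX 3%nat 0%nat u t) (DY 3%nat 0%nat u t) (spd u t) c (kappa_uu u t)
    (DX 1%nat 1%nat u t) (DY 1%nat 1%nat u t) (DX 2%nat 1%nat u t) (DY 2%nat 1%nat u t)
    (spd_pos u t Ht') Hrel) as Halg.
  cbv zeta in Halg. unfold kappa_t, kappa. apply Halg.
  - rewrite Hxu. unfold velx_u, spd_u, kappa. rewrite Hcrit. ring.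
  - rewrite Hyu. unfold vely_u, spd_u, kappa. rewrite Hcrit. ring.
  - rewrite Hxuu. unfold velx_uu, spd_uu, spd_u, kappa. rewrite Hcrit. ring.
  - rewrite Hyuu. unfold vely_uu, spd_uu, spd_u, kappa. rewrite Hcrit. ring.
Qed.

Lemma DX_periodic i u t : 0 <= t < T -> DX i 0%nat (u + 1) t = DX i 0%nat u t.
Proof.
  intros Ht. revert u. induction i as [|i IH]; intros u.
  - rewrite !DX0 by auto. apply (Hper u t Ht).
  - apply (is_derive_eq (fun v => DX i 0%nat (v + 1) t) u).
    + apply (is_derive_shift1 (fun v => DX i 0%nat v t)), DX_u, Ht.
    + eapply is_derive_ext; [| apply DX_u, Ht]. intros v; cbn. rewrite IH. reflexivity.
Qed.
Lemma DY_periodic i u t : 0 <= t < T -> DY i 0%nat (u + 1) t = DY i 0%nat u t.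
Proof.
  intros Ht. revert u. induction i as [|i IH]; intros u.
  - rewrite !DY0 by auto. apply (Hper u t Ht).
  - apply (is_derive_eq (fun v => DY i 0%nat (v + 1) t) u).
    + apply (is_derive_shift1 (fun v => DY i 0%nat v t)), DY_u, Ht.
    + eapply is_derive_ext; [| apply DY_u, Ht]. intros v; cbn. rewrite IH. reflexivity.
Qed.
Lemma kappa_periodic u t : 0 <= t < T -> kappa (u + 1) t = kappa u t.
Proof. intros Ht. unfold kappa, spd, xu, yu, xuu, yuu. rewrite !DX_periodic, !DY_periodic by auto. reflexivity. Qed.

Lemma kmax_attained t : 0 <= t < T ->
  exists u0, 0 <= u0 <= 1 /\ kmax X Y t = kappa u0 t /\ forall v, kappa v t <= kappa u0 t.
Proof.
  intros Ht.
  destruct (continuity_ab_maj (fun v => kappa v t) 0 1 ltac:(lra)) as [u0 [Hmax Hu0]].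
  { intros v _. apply ex_derive_continuity_pt. eexists. apply kappa_u_derive, Ht. }
  assert (Hall : forall v, kappa v t <= kappa u0 t).
  { intros v. destruct (periodic_value_in_01 (fun v => kappa v t) (fun u => kappa_periodic u t Ht) v)
      as [w [Hw ->]]. apply Hmax, Hw. }
  exists u0. split; [exact Hu0 | split; [| exact Hall]].
  set (E := fun k => exists u, 0 <= u <= 1 /\ k = curv X Y u t).
  assert (Hlub : is_lub E (kappa u0 t)).
  { split.
    - intros k [u [_ ->]]. rewrite curv_kappa by auto. apply Hall.
    - intros b Hb. apply Hb. exists u0. split; auto. rewrite curv_kappa; auto. }
  unfold kmax. fold E.
  apply (is_lub_u E); [apply (epsilon_spec (inhabits 0) _ (ex_intro _ _ Hlub)) | exact Hlub].
Qed.

Lemma spd_jcont u t : 0 <= t < T -> jcont T spd u t.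
Proof.
  intros Ht. apply (jcont_comp T sqrt (fun u t => xu u t * xu u t + yu u t * yu u t)).
  - unfold xu, yu. apply jcont_plus; apply jcont_mult; auto.
  - apply continuity_pt_sqrt. pose proof (spd2_pos u t Ht). lra.
Qed.

Lemma kappa_jcont u t : 0 <= t < T -> jcont T kappa u t.
Proof.
  intros Ht. pose proof (spd_pos u t Ht).
  apply (jcont_ext T (fun u t => (xu u t * yuu u t - yu u t * xuu u t) * / spd u t ^ 3)); [reflexivity |].
  apply jcont_mult.
  - unfold xu, yu, xuu, yuu. apply jcont_minus; apply jcont_mult; auto.
  - apply (jcont_comp T (fun z => / z ^ 3) spd); [apply spd_jcont, Ht |].
    apply ex_derive_continuity_pt. auto_derive. apply Rgt_not_eq. repeat apply Rmult_lt_0_compat; lra.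
Qed.

Lemma kmax_usc t0 : 0 <= t0 < T -> forall eps, eps > 0 -> exists delta, delta > 0 /\
  forall t, 0 <= t < T -> Rabs (t - t0) < delta -> kmax X Y t < kmax X Y t0 + eps.
Proof.
  intros Ht0 eps He.
  destruct (jcont_uniform T kappa t0 Ht0 (fun u _ => kappa_jcont u t0 Ht0) eps He) as [d [Hd Hnear]].
  exists d. split; auto. intros t Ht Htt.
  destruct (kmax_attained t Ht) as [u [Hu [-> _]]]. destruct (kmax_attained t0 Ht0) as [u0 [_ [-> Hall0]]].
  specialize (Hnear u t Ht Htt Hu). apply Rabs_lt_between in Hnear. pose proof (Hall0 u). lra.
Qed.

Lemma spd_ex_derive u t : 0 <= t < T -> ex_derive (fun v => spd v t) u.
Proof. intros Ht. ex_derive_curve_at Ht. Qed.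

Lemma ex_RInt_spd t : 0 <= t < T -> ex_RInt (fun u => spd u t) 0 1.
Proof. intros Ht. apply ex_RInt_01. intros u _. apply spd_ex_derive, Ht. Qed.

Lemma len_RInt t : 0 <= t < T -> len X Y t = RInt (fun u => spd u t) 0 1.
Proof.
  intros Ht. unfold len. rewrite <- Rint_RInt by (apply ex_RInt_spd, Ht).
  f_equal. apply functional_extensionality. intros u. apply speed_spd, Ht.
Qed.

Lemma len_pos t : 0 <= t < T -> len X Y t > 0.
Proof.
  intros Ht. rewrite len_RInt by auto.
  assert (H : RInt (fun _ => 0) 0 1 < RInt (fun u => spd u t) 0 1).
  { apply RInt_lt; [lra | | intros; apply continuous_const | intros; apply spd_pos, Ht].
    intros u _. apply (@ex_derive_continuous R_AbsRing R_NormedModule), spd_ex_derive, Ht. }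
  rewrite RInt_const in H. unfold scal in H; simpl in H. unfold mult in H; simpl in H. lra.
Qed.

Lemma len_continuity_pt t : 0 < t < T -> continuity_pt (len X Y) t.
Proof.
  intros Ht e He.
  destruct (RInt_jcont T spd t ltac:(lra) (fun u _ => spd_jcont u t ltac:(lra)) ex_RInt_spd e He)
    as [d [Hd Hnear]].
  assert (Hd' : 0 < Rmin d (Rmin t (T - t))) by (repeat apply Rmin_glb_lt; lra).
  exists (Rmin d (Rmin t (T - t))). split; auto. intros s [_ Hs]. cbn in Hs. unfold R_dist in Hs.
  pose proof (Rmin_l d (Rmin t (T - t))). pose proof (Rmin_r d (Rmin t (T - t))).
  pose proof (Rmin_l t (T - t)). pose proof (Rmin_r t (T - t)).
  assert (Hs' : 0 <= s < T) by (apply Rabs_lt_between in Hs; lra).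
  cbn. unfold R_dist. rewrite !len_RInt by lra. apply Hnear; auto. lra.
Qed.

Lemma tot_curv_RInt t : 0 <= t < T ->
  tot_curv X Y t = RInt (fun u => kappa u t * spd u t) 0 1 /\ ex_RInt (fun u => kappa u t * spd u t) 0 1.
Proof.
  intros Ht.
  assert (Hex : ex_RInt (fun u => kappa u t * spd u t) 0 1) by (apply ex_RInt_01; ex_derive_curve_at Ht).
  split; [| exact Hex]. unfold tot_curv. rewrite <- Rint_RInt by exact Hex.
  f_equal. apply functional_extensionality. intros u. rewrite curv_kappa, speed_spd; auto.
Qed.

Definition area_dens u t := - DX 0%nat 0%nat u t * DY 1%nat 0%nat u t + DY 0%nat 0%nat u t * DX 1%nat 0%nat u t.
Definition area_dens_t u t := - DX 0%nat 1%nat u t * DY 1%nat 0%nat u t - DX 0%nat 0%nat u t * DY 1%nat 1%nat u t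
  + DY 0%nat 1%nat u t * DX 1%nat 0%nat u t + DY 0%nat 0%nat u t * DX 1%nat 1%nat u t.

Lemma ex_RInt_area_dens t : 0 <= t < T -> ex_RInt (fun u => area_dens u t) 0 1.
Proof. intros Ht. apply ex_RInt_01. intros u _. unfold area_dens. auto_derive. side_conditions_DXY. Qed.

Lemma area_RInt t : 0 <= t < T -> area X Y t = - / 2 * RInt (fun u => area_dens u t) 0 1.
Proof.
  intros Ht. unfold area. rewrite <- Rint_RInt by (apply ex_RInt_area_dens, Ht).
  do 2 f_equal. apply functional_extensionality. intros u.
  rewrite nu1_eq, nu2_eq, speed_spd, <- DX0, <- DY0 by auto.
  pose proof (spd_pos u t Ht). unfold area_dens, xu, yu. field. lra.
Qed.

Lemma area_dens_derive_t u t : 0 < t < T -> is_derive (fun s => area_dens u s) t (area_dens_t u t).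
Proof. intros Ht. unfold area_dens, area_dens_t. auto_derive; [side_conditions_DXY |]. rewrite_Derive_DXY. ring. Qed.

Ltac jcont_DXY := repeat first
  [apply jcont_plus | apply jcont_minus | apply jcont_mult | apply jcont_opp | apply DXc; lra | apply DYc; lra].

Lemma RInt_area_dens_derive t : 0 < t < T ->
  is_derive (fun s => RInt (fun u => area_dens u s) 0 1) t (RInt (fun u => area_dens_t u t) 0 1).
Proof.
  intros Ht.
  replace (RInt (fun u => area_dens_t u t) 0 1) with (RInt (fun u => Derive (fun s => area_dens u s) t) 0 1)
    by (apply RInt_ext; intros u _; apply Derive_of_is_derive, area_dens_derive_t, Ht).
  pose proof (is_derive_RInt_param (fun s u => area_dens u s) 0 1 t) as Hparam.
  rewrite Rmin_left, Rmax_right in Hparam by lra. apply Hparam.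
  - apply (locally_in_interval 0 T); auto. intros s Hs u _. eexists. apply area_dens_derive_t, Hs.
  - intros u _ eps.
    assert (Hjc : jcont T area_dens_t u t) by (unfold area_dens_t; jcont_DXY).
    destruct (Hjc eps (cond_pos eps)) as [d [Hd Hnear]].
    assert (Hd' : 0 < Rmin d (Rmin t (T - t))) by (repeat apply Rmin_glb_lt; lra).
    exists (mkposreal _ Hd'). intros s v Hs Hv. cbn in Hs, Hv.
    pose proof (Rmin_l d (Rmin t (T - t))). pose proof (Rmin_r d (Rmin t (T - t))).
    pose proof (Rmin_l t (T - t)). pose proof (Rmin_r t (T - t)).
    assert (Hs' : 0 < s < T) by (apply Rabs_lt_between in Hs; lra).
    rewrite !(Derive_of_is_derive _ _ _ (area_dens_derive_t _ _ Hs')), (Derive_of_is_derive _ _ _ (area_dens_derive_t _ _ Ht)).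
    apply Hnear; lra.
  - apply (locally_in_interval 0 T); auto. intros s Hs. apply ex_RInt_area_dens. lra.
Qed.

Lemma area_continuous_0 e : e > 0 ->
  exists d, d > 0 /\ forall t, 0 <= t < d -> t < T -> Rabs (area X Y t - area X Y 0) < e.
Proof.
  intros He.
  assert (Hjc : forall u, 0 <= u <= 1 -> jcont T area_dens u 0) by (intros u _; unfold area_dens; jcont_DXY).
  destruct (RInt_jcont T area_dens 0 ltac:(lra) Hjc ex_RInt_area_dens (2 * e) ltac:(lra)) as [d [Hd Hnear]].
  exists d. split; auto. intros t Ht HtT.
  rewrite !area_RInt by lra.
  specialize (Hnear t ltac:(lra) ltac:(rewrite Rabs_right; lra)).
  rewrite <- Rmult_minus_distr_l, Rabs_mult, Rabs_left by lra. lra.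
Qed.

Definition area_flux u t := DY 0%nat 0%nat u t * DX 0%nat 1%nat u t - DX 0%nat 0%nat u t * DY 0%nat 1%nat u t.
Definition area_flux_u u t := DY 1%nat 0%nat u t * DX 0%nat 1%nat u t + DY 0%nat 0%nat u t * DX 1%nat 1%nat u t
  - DX 1%nat 0%nat u t * DY 0%nat 1%nat u t - DX 0%nat 0%nat u t * DY 1%nat 1%nat u t.

Lemma DX_t_periodic u t : 0 < t < T -> DX 0%nat 1%nat (u + 1) t = DX 0%nat 1%nat u t.
Proof.
  intros Ht. apply (is_derive_eq (fun s => DX 0%nat 0%nat (u + 1) s) t); [apply DX_t, Ht |].
  eapply is_derive_ext_loc; [| apply DX_t, Ht].
  apply (locally_in_interval 0 T); auto. intros s Hs. rewrite !DX0 by lra. symmetry. apply Hper. lra.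
Qed.
Lemma DY_t_periodic u t : 0 < t < T -> DY 0%nat 1%nat (u + 1) t = DY 0%nat 1%nat u t.
Proof.
  intros Ht. apply (is_derive_eq (fun s => DY 0%nat 0%nat (u + 1) s) t); [apply DY_t, Ht |].
  eapply is_derive_ext_loc; [| apply DY_t, Ht].
  apply (locally_in_interval 0 T); auto. intros s Hs. rewrite !DY0 by lra. symmetry. apply Hper. lra.
Qed.

Lemma RInt_area_flux_u t : 0 < t < T -> is_RInt (fun u => area_flux_u u t) 0 1 0.
Proof.
  intros Ht.
  assert (Hder : forall u, is_derive (fun v => area_flux v t) u (area_flux_u u t)).
  { intros u. unfold area_flux, area_flux_u. auto_derive; [side_conditions_DXY |]. rewrite_Derive_DXY. ring. }
  assert (Hper1 : area_flux (0 + 1) t = area_flux 0 t).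
  { unfold area_flux. rewrite DX_t_periodic, DY_t_periodic, DX_periodic, DY_periodic by lra. reflexivity. }
  assert (H : is_RInt (fun u => area_flux_u u t) 0 1 (minus (area_flux 1 t) (area_flux 0 t))).
  { apply (@is_RInt_derive R_CompleteNormedModule (fun v => area_flux v t)); [intros; apply Hder |].
    intros u _. apply (@ex_derive_continuous R_AbsRing R_NormedModule).
    unfold area_flux_u. auto_derive. side_conditions_DXY. }
  rewrite Rplus_0_l in Hper1. rewrite Hper1 in H.
  replace (minus (area_flux 0 t) (area_flux 0 t)) with 0 in H by (unfold minus, plus, opp; cbn; ring).
  exact H.
Qed.

(** * Solutions of the flows *)

Section Flow.
Variables (fl : Flow) (n : nat).
Hypothesis Hn : (1 <= n)%nat.
Hypothesis Hrot : forall t, 0 <= t < T -> / (2 * PI) * tot_curv X Y t = INR n.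
Hypothesis Hflow : forall u t, 0 < t < T ->
  pdt X u t = (curv_tilde X Y u t - gfun fl X Y t / len X Y t) * nu1 X Y u t /\
  pdt Y u t = (curv_tilde X Y u t - gfun fl X Y t / len X Y t) * nu2 X Y u t.

(* The normal velocity of the flow is [kappa - cflow]. *)
Definition cflow t := / len X Y t * tot_curv X Y t + gfun fl X Y t / len X Y t.

Lemma DX_t_flow u t : 0 < t < T -> DX 0%nat 1%nat u t = velx (cflow t) u t.
Proof.
  intros Ht. rewrite <- pdt_X, (proj1 (Hflow u t Ht)) by auto.
  unfold curv_tilde, velx, cflow. rewrite curv_kappa, nu1_eq by lra. ring.
Qed.
Lemma DY_t_flow u t : 0 < t < T -> DY 0%nat 1%nat u t = vely (cflow t) u t.
Proof.
  intros Ht. rewrite <- pdt_Y, (proj2 (Hflow u t Ht)) by auto.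
  unfold curv_tilde, vely, cflow. rewrite curv_kappa, nu2_eq by lra. ring.
Qed.

Lemma tot_curv_value t : 0 <= t < T -> tot_curv X Y t = 2 * PI * INR n.
Proof. intros Ht. rewrite <- (Hrot t Ht). pose proof PI_RGT_0. field. lra. Qed.

Lemma tot_curv_pos t : 0 <= t < T -> tot_curv X Y t > 0.
Proof.
  intros Ht. rewrite tot_curv_value by auto. pose proof PI_RGT_0.
  assert (INR n >= 1) by (apply Rle_ge, (le_INR 1), Hn). nra.
Qed.

Lemma kmax_pos t : 0 <= t < T -> kmax X Y t > 0.
Proof.
  intros Ht. destruct (kmax_attained t Ht) as [u0 [_ [-> Hall]]].
  destruct (Rlt_le_dec 0 (kappa u0 t)) as [h|h]; [lra | exfalso].
  pose proof (tot_curv_pos t Ht) as Htot. destruct (tot_curv_RInt t Ht) as [Etot Hex]. rewrite Etot in Htot.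
  assert (RInt (fun u => kappa u t * spd u t) 0 1 <= RInt (fun _ => 0) 0 1).
  { apply RInt_le; [lra | exact Hex | apply ex_RInt_const |]. intros u _.
    pose proof (spd_pos u t Ht). pose proof (Hall u). nra. }
  rewrite RInt_const in H. unfold scal in H; simpl in H. unfold mult in H; simpl in H. lra.
Qed.

Lemma area_dens_t_flow u t : 0 < t < T ->
  area_dens_t u t = 2 * (kappa u t * spd u t - cflow t * spd u t) + area_flux_u u t.
Proof.
  intros Ht. pose proof (spd_pos u t ltac:(lra)). pose proof (spd2_pos u t ltac:(lra)).
  assert (Hrel : spd u t * spd u t = xu u t * xu u t + yu u t * yu u t) by (apply sqrt_sqrt; lra).
  replace (kappa u t * spd u t - cflow t * spd u t) with ((kappa u t - cflow t) * (spd u t * spd u t) / spd u t)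
    by (field; lra).
  rewrite Hrel. unfold area_dens_t, area_flux_u. rewrite !DX_t_flow, !DY_t_flow by auto.
  unfold velx, vely, xu, yu. field. lra.
Qed.

Lemma area_derive t : 0 < t < T -> is_derive (area X Y) t (cflow t * len X Y t - tot_curv X Y t).
Proof.
  intros Ht.
  apply (is_derive_ext_loc (fun s => - / 2 * RInt (fun u => area_dens u s) 0 1)).
  { apply (locally_in_interval 0 T); auto. intros s Hs. symmetry. apply area_RInt. lra. }
  assert (Hint : RInt (fun u => area_dens_t u t) 0 1 = 2 * (tot_curv X Y t - cflow t * len X Y t)).
  { destruct (tot_curv_RInt t ltac:(lra)) as [Etot Hex]. rewrite Etot, len_RInt by lra.
    apply is_RInt_unique.
    apply (is_RInt_ext (fun u => plus (scal 2 (minus (kappa u t * spd u t) (scal (cflow t) (spd u t))))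
      (area_flux_u u t))).
    { intros u _. rewrite area_dens_t_flow by auto. cbn. unfold mult, plus, opp; cbn. ring. }
    replace (2 * (RInt (fun u => kappa u t * spd u t) 0 1 - cflow t * RInt (fun u => spd u t) 0 1)) with
      (plus (scal 2 (minus (RInt (fun u => kappa u t * spd u t) 0 1) (scal (cflow t) (RInt (fun u => spd u t) 0 1)))) 0)
      by (cbn; unfold mult, plus, opp; cbn; ring).
    apply (@is_RInt_plus R_NormedModule); [| apply RInt_area_flux_u, Ht].
    apply (@is_RInt_scal R_NormedModule), (@is_RInt_minus R_NormedModule);
      [| apply (@is_RInt_scal R_NormedModule)]; apply (@RInt_correct R_CompleteNormedModule);
      [exact Hex | apply ex_RInt_spd; lra]. }
  pose proof (RInt_area_dens_derive t Ht) as HD. rewrite Hint in HD.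
  replace (cflow t * len X Y t - tot_curv X Y t) with (- / 2 * (2 * (tot_curv X Y t - cflow t * len X Y t)))
    by field.
  apply is_derive_scal, HD.
Qed.

Lemma area_nonneg_JP : fl = JP -> area X Y 0 > 0 -> forall t, 0 < t < T -> area X Y t >= 0.
Proof.
  intros Hfl HA0.
  assert (Hg : 2 * PI * INR n > 0) by (rewrite <- (tot_curv_value 0) by lra; apply tot_curv_pos; lra).
  apply (ode_barrier_nonneg (area X Y) (len X Y) (2 * PI * INR n) T Hg HA0 area_continuous_0).
  - intros t Ht. pose proof (len_pos t ltac:(lra)). rewrite <- (tot_curv_value t) by lra.
    replace (len X Y t ^ 2 / (2 * area X Y t) - tot_curv X Y t) with (cflow t * len X Y t - tot_curv X Y t)
      by (unfold cflow, gfun; rewrite Hfl; unfold Rdiv; set (w := / (2 * area X Y t)); field; lra).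
    apply area_derive, Ht.
  - intros t Ht. apply len_pos. lra.
  - apply len_continuity_pt.
Qed.

Lemma cflow_nonneg : area X Y 0 > 0 -> forall t, 0 < t < T -> 0 <= cflow t.
Proof.
  intros HA0 t Ht. assert (Ht' : 0 <= t < T) by lra.
  pose proof (len_pos t Ht') as HL. pose proof (tot_curv_pos t Ht') as Htot.
  assert (HiL : 0 < / len X Y t) by (apply Rinv_0_lt_compat; lra).
  assert (Hcase : fl = AP \/ fl = LP \/ fl = JP) by (destruct fl; auto).
  unfold cflow, gfun. destruct Hcase as [Hfl | [Hfl | Hfl]]; rewrite Hfl.
  - unfold Rdiv. rewrite Rmult_0_l. nra.
  - set (I := Rint (fun u => curv_tilde X Y u t ^ 2 * speed X Y u t) 0 1).
    assert (HI : 0 <= I).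
    { set (c := / len X Y t * tot_curv X Y t).
      assert (Hex : ex_RInt (fun u => (kappa u t - c) ^ 2 * spd u t) 0 1)
        by (apply ex_RInt_01; ex_derive_curve_at Ht').
      replace I with (RInt (fun u => (kappa u t - c) ^ 2 * spd u t) 0 1).
      2:{ unfold I. rewrite <- Rint_RInt by exact Hex. f_equal. apply functional_extensionality. intros u.
          unfold curv_tilde. rewrite curv_kappa, speed_spd by auto. reflexivity. }
      apply RInt_ge_0; [lra | exact Hex |]. intros u _. pose proof (spd_pos u t Ht').
      apply Rmult_le_pos; [apply pow2_ge_0 | lra]. }
    assert (0 <= len X Y t * / tot_curv X Y t * I / len X Y t).
    { unfold Rdiv. repeat apply Rmult_le_pos; try lra. left; apply Rinv_0_lt_compat; lra. }
    nra.
  - pose proof (area_nonneg_JP Hfl HA0 t Ht) as HA.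
    replace (/ len X Y t * tot_curv X Y t + (len X Y t ^ 2 / (2 * area X Y t) - tot_curv X Y t) / len X Y t)
      with (len X Y t ^ 2 * / (2 * area X Y t) * / len X Y t)
      by (unfold Rdiv; set (w := / (2 * area X Y t)); field; lra).
    apply Rmult_le_pos; [apply Rmult_le_pos; [apply pow2_ge_0 |] | lra].
    destruct (Req_dec (area X Y t) 0) as [-> | Hne]; [rewrite Rmult_0_r, Rinv_0; lra |].
    left. apply Rinv_0_lt_compat. lra.
Qed.

Lemma kappa_t_le_cube_at_max u0 t : 0 < t < T -> 0 <= cflow t ->
  (forall v, kappa v t <= kappa u0 t) -> kappa_t u0 t <= kappa u0 t ^ 3.
Proof.
  intros Ht Hc Hmax. assert (Ht' : 0 <= t < T) by lra.
  pose proof (is_derive_at_max_eq0 _ _ _ (kappa_u_derive u0 t Ht') Hmax) as Hcrit.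
  pose proof (is_derive2_at_max_le0 (fun v => kappa v t) (fun v => kappa_u v t) u0 (kappa_uu u0 t)
    (fun v => kappa_u_derive v t Ht') (Derive_correct _ _ (kappa_u_ex_derive u0 t Ht')) Hmax) as Hkuu.
  rewrite (kappa_t_at_critical (cflow t) u0 t Ht (fun v => DX_t_flow v t Ht) (fun v => DY_t_flow v t Ht) Hcrit).
  pose proof (spd_pos u0 t Ht').
  assert (kappa_uu u0 t / spd u0 t ^ 2 <= 0)
    by (unfold Rdiv; apply Rmult_le_0_r; [exact Hkuu | left; apply Rinv_0_lt_compat; nra]).
  assert (0 <= kappa u0 t ^ 2 * cflow t) by (apply Rmult_le_pos; [nra | exact Hc]).
  nra.
Qed.

Definition psi e t := / kmax X Y t ^ 2 + (2 + e) * t.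

(* Hamilton's trick: [/ kmax^2] is bounded above by [/ kappa(u0, .)^2] for a
   maximum point [u0] at time [t], and the latter has slope [>= -2] at [t]. *)
Lemma inv_kappa_sq_slope u0 t : 0 < t < T -> 0 <= cflow t -> kappa u0 t > 0 ->
  (forall v, kappa v t <= kappa u0 t) ->
  exists l, is_derive (fun s => / kappa u0 s ^ 2) t l /\ l >= -2.
Proof.
  intros Ht Hc Hpos Hmax.
  pose proof (kappa_t_le_cube_at_max u0 t Ht Hc Hmax) as Hcube.
  pose proof (kappa_t_derive u0 t Ht) as Hkt.
  exists (- 2 * kappa_t u0 t / kappa u0 t ^ 3). split.
  - auto_derive; [split; [eexists; exact Hkt | split; [apply Rgt_not_eq; nra | auto]] |].
    rewrite (Derive_of_is_derive (fun x => kappa u0 x) t (kappa_t u0 t) Hkt). field. lra.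
  - assert (Hk3 : 0 < kappa u0 t ^ 3) by (apply pow_lt; lra).
    enough (kappa_t u0 t / kappa u0 t ^ 3 <= 1) by (unfold Rdiv in *; lra).
    apply (Rmult_le_reg_r (kappa u0 t ^ 3)); auto. unfold Rdiv. rewrite Rmult_assoc, Rinv_l by lra. lra.
Qed.

Lemma psi_left_increase e t : e > 0 -> 0 < t < T -> 0 <= cflow t ->
  exists d, d > 0 /\ forall h, 0 < h < d -> psi e (t - h) < psi e t.
Proof.
  intros He Ht Hc. assert (Ht' : 0 <= t < T) by lra.
  destruct (kmax_attained t Ht') as [u0 [_ [HK Hmax]]].
  pose proof (kmax_pos t Ht') as HKpos. rewrite HK in HKpos.
  destruct (inv_kappa_sq_slope u0 t Ht Hc HKpos Hmax) as [l [Hz Hl]].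
  set (z := fun s => / kappa u0 s ^ 2) in Hz.
  apply is_derive_Reals in Hz.
  destruct (Hz (e / 2) ltac:(lra)) as [d1 Hd1]. pose proof (cond_pos d1).
  destruct (continuity_pt_eps (fun s => kappa u0 s) t
    (ex_derive_continuity_pt _ _ (ex_intro _ _ (kappa_t_derive u0 t Ht))) (kappa u0 t / 2) ltac:(lra))
    as [d2 [Hd2 Hnear]].
  assert (Hd : Rmin (Rmin d1 d2) t > 0) by (repeat apply Rmin_glb_lt; lra).
  pose proof (Rmin_l (Rmin d1 d2) t). pose proof (Rmin_r (Rmin d1 d2) t).
  pose proof (Rmin_l d1 d2). pose proof (Rmin_r d1 d2).
  exists (Rmin (Rmin d1 d2) t). split; auto. intros h Hh.
  set (s := t - h). assert (Hs : 0 <= s < T) by (unfold s; lra).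
  destruct (kmax_attained s Hs) as [us [_ [HKs Hmaxs]]].
  specialize (Hnear s ltac:(unfold s; rewrite Rabs_left; lra)). cbn in Hnear. apply Rabs_lt_between in Hnear.
  pose proof (Hmaxs u0) as Hle. rewrite <- HKs in Hle.
  assert (HzK : / kmax X Y s ^ 2 <= z s).
  { unfold z. apply Rinv_le_contravar; [nra | apply pow_incr; lra]. }
  specialize (Hd1 (- h) ltac:(lra) ltac:(rewrite Rabs_left; lra)).
  replace (t + - h) with s in Hd1 by (unfold s; ring).
  apply Rabs_lt_between in Hd1. change (/ kappa u0 s ^ 2 - / kappa u0 t ^ 2) with (z s - z t) in Hd1.
  assert (Hzs : z s - z t < (2 + e / 2) * h).
  { assert ((- 2 - e / 2) * h < (z s - z t) / - h * h) by (apply Rmult_lt_compat_r; lra).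
    replace (z s - z t) with (- ((z s - z t) / - h * h)) by (field; lra). lra. }
  unfold psi. fold s. rewrite HK.
  assert (z t = / kappa u0 t ^ 2) by reflexivity.
  assert (s = t - h) by reflexivity. nra.
Qed.

Lemma psi_right_usc e t : e > 0 -> 0 <= t < T -> forall eps, eps > 0 ->
  exists d, d > 0 /\ forall s, t < s < t + d -> s < T -> psi e t <= psi e s + eps.
Proof.
  intros He Ht eps Heps.
  pose proof (kmax_pos t Ht) as HKt.
  assert (Hcont : continuity_pt (fun y => / y ^ 2) (kmax X Y t))
    by (apply ex_derive_continuity_pt; auto_derive; apply Rgt_not_eq; nra).
  destruct (continuity_pt_eps _ _ Hcont eps Heps) as [r [Hr Hnear]].
  destruct (kmax_usc t Ht r Hr) as [d [Hd Husc]].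
  exists d. split; auto. intros s Hs HsT.
  assert (Hs' : 0 <= s < T) by lra.
  pose proof (kmax_pos s Hs') as HKs.
  specialize (Husc s Hs' ltac:(rewrite Rabs_right; lra)).
  unfold psi. assert ((2 + e) * t <= (2 + e) * s) by (apply Rmult_le_compat_l; lra).
  destruct (Rle_lt_dec (kmax X Y s) (kmax X Y t)) as [h|h].
  - assert (/ kmax X Y t ^ 2 <= / kmax X Y s ^ 2) by (apply Rinv_le_contravar; [nra | apply pow_incr; lra]).
    lra.
  - specialize (Hnear (kmax X Y s) ltac:(rewrite Rabs_right; lra)). apply Rabs_lt_between in Hnear. lra.
Qed.

Lemma psi_nondecreasing e t tau : e > 0 -> area X Y 0 > 0 -> 0 <= t -> t <= tau -> tau < T ->
  psi e t <= psi e tau.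
Proof.
  intros He HA0 Ht Htt HtT.
  apply le_by_real_induction; auto.
  - intros c Hc. apply psi_left_increase; auto; [lra | apply cflow_nonneg; auto; lra].
  - intros c Hc eps Heps. destruct (psi_right_usc e c He ltac:(lra) eps Heps) as [d [Hd H]].
    exists d. split; auto. intros s Hs Hsb. apply H; auto. lra.
Qed.

Lemma kmax_blowup_rate : area X Y 0 > 0 ->
  (forall M delta, delta > 0 -> exists t, 0 <= t < T /\ T - delta < t /\ kmax X Y t > M) ->
  forall t, 0 <= t < T -> kmax X Y t >= 1 / sqrt (2 * (T - t)).
Proof.
  intros HA0. apply blowup_lower_bound; [exact kmax_pos |].
  intros e t tau He Ht Htau HtauT. exact (psi_nondecreasing e t tau He HA0 Ht Htau HtauT).
Qed.

End Flow.
End SmoothCurve.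

Theorem mainTheorem16 (fl : Flow) (n : nat) (X Y : R -> R -> R) (T : R) :
  (1 <= n)%nat ->
  maximal_solution fl n X Y T ->
  area X Y 0 > 0 ->
  (forall M delta, delta > 0 ->
     exists t, 0 <= t < T /\ T - delta < t /\ kmax X Y t > M) ->
  forall t, 0 <= t < T -> kmax X Y t >= 1 / sqrt (2 * (T - t)).
Proof.
  intros Hn [[HT [[DX [DX0 [DXu [DXt DXc]]]] [[DY [DY0 [DYu [DYt DYc]]]] [Hper [Hspeed [Hrot Hflow]]]]]] _].
  exact (kmax_blowup_rate X Y T DX DY HT DX0 DY0 DXu DYu DXt DYt DXc DYc Hper Hspeed fl n Hn Hrot Hflow).
Qed.
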